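(* Let $\langle X,\tau\rangle$ be a Hausdorff topological space and $S\subseteq X$ a subset such that both $S$ and $X\setminus S$ are dense in $X$. If the subspace $\langle S,\tau\upharpoonright S\rangle$ is homeomorphic to the Sorgenfrey line, then $\langle X,\tau\rangle$ is not a continuous open image of the Sorgenfrey line.
   Context: The Sorgenfrey line is $\mathbb R$ with topology generated by $\{[a,b):a,b\in\mathbb R\}$; ''continuous open image'' means image under a continuous open surjection. *)

From HB Require Import structures.
From mathcomp Require Import all_boot all_order all_algebra.
From mathcomp Require Import all_classical all_reals all_analysis.
Set Implicit Arguments. Unset Strict Implicit. Unset Printing Implicit Defensive.
Import Order.TTheory GRing.Theory Num.Theory.
Local Open Scope classical_set_scope.
Local Open Scope ring_scope.

Definition sorgenfrey_open {R : realType} (U : set R) : Prop :=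
  forall x, U x -> exists2 b : R, x < b & [set y | x <= y < b] `<=` U.

(* The subspace (S, tau|S) of a topological space X is homeomorphic to the
   Sorgenfrey line: there are mutually inverse bijections h : S -> R and
   g : R -> S (h given on X, only its values on S matter), both continuous
   for the subspace topology on S (whose opens are the U `&` S, U open in X)
   and the Sorgenfrey topology on R. *)
Definition subspace_homeomorphic_to_sorgenfrey {R : realType}
    (X : topologicalType) (S : set X) : Prop :=
  exists (h : X -> R) (g : R -> X),
    [/\ (forall r, S (g r)),
        (forall r, h (g r) = r),
        (forall x, S x -> g (h x) = x),
        (forall V : set R, sorgenfrey_open V ->
           exists U : set X, open U /\ S `&` (h @^-1` V) = S `&` U) &
        (forall U : set X, open U -> sorgenfrey_open (g @^-1` U))].

Definition continuous_open_image_of_sorgenfrey {R : realType}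
    (X : topologicalType) : Prop :=
  exists f : R -> X,
    [/\ (forall x : X, exists r, f r = x),
        (forall U : set X, open U -> sorgenfrey_open (f @^-1` U)) &
        (forall V : set R, sorgenfrey_open V -> open (f @` V))].

From HB Require Import structures.
From mathcomp Require Import all_boot all_order all_algebra.
From mathcomp Require Import all_classical all_reals all_analysis.
From mathcomp Require Import lra.
Import Order.TTheory GRing.Theory Num.Theory numFieldNormedType.Exports.
Local Open Scope classical_set_scope.
Local Open Scope ring_scope.

(* Let f : R -> X be a continuous open surjection from the
   Sorgenfrey line and h : S -> R the homeomorphism.  Pulling back along f,
   T := f^-1(S) and phi := h o f : T -> R form a "Sorgenfrey trace": T and
   its complement are dense in R (f is open, S and X \ S are dense), phi is
   onto, continuous and open for the Sorgenfrey topologies on the right, and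
   its graph is closed from the right (X is Hausdorff).  We show that no such
   trace exists.  Every value d has an "anchor": a preimage m such that phi
   stays >= d just right of m while d is not taken just left of m.  Sorting
   the values by the width of the anchor window and the position of the
   anchor on a grid covers R by countably many blocks, so by the Baire
   category theorem one block is dense in an interval [p, q].  Inside that
   block the anchor map is monotone and anchors come arbitrarily close, from
   the right, to every point of T near them; a point u outside T chosen among
   them is then forced into T by right-closedness of the graph. *)

Lemma ballR (R : realType) (x e y : R) : ball x e y <-> `|x - y| < e.
Proof. by rewrite -ball_normE. Qed.

Lemma open_ballR (R : realType) (A : set R) :
  (forall x, A x -> exists2 e : R, 0 < e & forall y, `|x - y| < e -> A y) ->
  open A.
Proof.
move=> Aball; rewrite openE => x Ax; apply/nbhs_ballP.
by have [e e0 Ae] := Aball x Ax; exists e => // y /ballR; exact: Ae.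
Qed.

Lemma ball_of_openR (R : realType) (A : set R) x : open A -> A x ->
  exists2 e : R, 0 < e & forall y, `|x - y| < e -> A y.
Proof.
move=> oA Ax; have /nbhs_ballP[e e0 Ae] : nbhs x A by exact: open_nbhs_nbhs.
by exists e => // y xy; apply: Ae; exact/ballR.
Qed.

Definition dense_in_itv {R : realType} (A : set R) (p q : R) : Prop :=
  forall x y, p <= x -> x < y -> y <= q -> exists2 d, A d & x < d < y.

Definition far_from {R : realType} (A : set R) : set R :=
  [set z | exists2 e : R, 0 < e & forall d, A d -> e <= `|d - z|].

Lemma far_from_open (R : realType) (A : set R) : open (far_from A).
Proof.
apply: open_ballR => z [e e0 Ae]; exists (e / 2) => [|y zy]; first lra.
exists (e / 2) => [|d Ad]; first lra.
have := Ae d Ad; have := ler_distD y d z; rewrite (distrC z y) in zy; lra.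
Qed.

Lemma far_from_dense (R : realType) (A : set R) :
  (forall p q, p < q -> ~ dense_in_itv A p q) -> dense (far_from A).
Proof.
move=> nowhere D [z Dz] oD; have [r r0 Dr] := @ball_of_openR R D z oD Dz.
have [x [y [zx xy yz Agap]]] : exists x y, [/\ z - r / 2 <= x, x < y,
    y <= z + r / 2 & forall d, A d -> ~ (x < d < y)].
  apply: contrapT => nogap; apply: (nowhere (z - r / 2) (z + r / 2)); first lra.
  move=> x y zx xy yz; apply: contrapT => nod; apply: nogap.
  by exists x, y; split => // d Ad dxy; apply: nod; exists d.
exists ((x + y) / 2); split.
  by apply: Dr; rewrite ltr_distlC; apply/andP; split; lra.
exists ((y - x) / 2) => [|d Ad]; first lra.
rewrite leNgt; apply/negP; rewrite ltr_distlC => /andP[d1 d2].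
by apply: (Agap d Ad); apply/andP; split; lra.
Qed.

Lemma baire_interval (R : realType) (I : countType) (F : I -> set R) :
  (forall x, exists i, F i x) ->
  exists i (p q : R), p < q /\ dense_in_itv (F i) p q.
Proof.
move=> cover; apply: contrapT => nowhere.
pose G n := if @unpickle I n is Some i then F i else set0.
have G_nowhere n p q : p < q -> ~ dense_in_itv (G n) p q.
  move=> pq dG; rewrite /G in dG; case: (unpickle n) dG => [i dG|dG].
    by apply: nowhere; exists i, p, q.
  by have [] := dG p q (lexx p) pq (lexx q).
have far_open_dense n : open (far_from (G n)) /\ dense (far_from (G n)).
  by split; [exact: far_from_open | apply: far_from_dense; exact: G_nowhere].
have [z [_ farz]] := Baire far_open_dense (ex_intro _ 0 Logic.I) openT.
have [i Fiz] := cover z; have [e e0 Ge] := farz (pickle i) Logic.I.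
by have := Ge z; rewrite /G pickleK subrr normr0 => /(_ Fiz); lra.
Qed.

Section SorgenfreyTrace.
Variable R : realType.
Variables (T : set R) (phi : R -> R).
Hypothesis T_dense : forall a b : R, a < b -> exists t, a < t < b /\ T t.
Hypothesis T_codense : forall a b : R, a < b -> exists t, a < t < b /\ ~ T t.
Hypothesis phi_surj : forall r, exists t, T t /\ phi t = r.
Hypothesis phi_right_cont : forall {t}, T t -> forall e : R, 0 < e ->
  exists2 b, t < b & forall t', T t' -> t <= t' < b ->
    phi t <= phi t' < phi t + e.
Hypothesis phi_right_open : forall {t}, T t -> forall b, t < b ->
  exists2 e : R, 0 < e & forall r, phi t <= r < phi t + e ->
    exists t', [/\ T t', t <= t' < b & phi t' = r].
Hypothesis phi_graph_closed : forall u r, (forall e b : R, 0 < e -> u < b ->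
  exists t, [/\ T t, u <= t < b & r <= phi t < r + e]) -> T u /\ phi u = r.

Definition anchor (d m w : R) : Prop :=
  [/\ T m, phi m = d,
     (forall t, T t -> m <= t < m + w -> d <= phi t) &
     (forall t, T t -> m - w <= t < m -> phi t <> d)].

Lemma anchor_shrink d m w w' : 0 < w' <= w -> anchor d m w -> anchor d m w'.
Proof.
move=> /andP[w'0 w'w] [Tm pm right left]; split => // t Tt /andP[t1 t2].
  by apply: right => //; apply/andP; split => //; lra.
by apply: left => //; apply/andP; split => //; lra.
Qed.

(* The least preimage of d to the right of a point s outside T is an
   anchor: it is a preimage by right-closedness of the graph, phi stays
   above d just right of it by continuity, and s < m leaves room on the
   left. *)
Lemma exists_anchor d : exists m w, 0 < w /\ anchor d m w.
Proof.
have [t0 [Tt0 pt0]] := phi_surj d.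
have [s [/andP[s1 s2] nTs]] := T_codense (t0 - 1) t0 ltac:(lra).
pose P := [set t | s <= t /\ T t /\ phi t = d].
have Plb : has_lbound P by exists s => t [].
have Pinf : has_inf P by split => //; exists t0; split => //; lra.
set m := inf P.
have sm : s <= m by apply: lb_le_inf => [|t []]; [case: Pinf|].
have [Tm pm] : T m /\ phi m = d.
  apply: phi_graph_closed => e b e0 mb.
  have bm : 0 < b - m by rewrite subr_gt0.
  have [t [st [Tt ptd]] tb] := inf_adherent bm Pinf.
  have mt : m <= t by apply: ge_inf.
  by exists t; split => //; rewrite ?ptd; apply/andP; split; lra.
have sltm : s < m by rewrite lt_neqAle sm andbT; apply: contraPneq nTs => ->.
have [b mb right] := phi_right_cont Tm 1 ltr01.
pose w := Num.min (m - s) (b - m).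
have w_left : w <= m - s by rewrite /w ge_min lexx.
have w_right : w <= b - m by rewrite /w ge_min lexx orbT.
exists m, w; split; first by rewrite /w lt_min; apply/andP; split; lra.
split => // t Tt /andP[t1 t2].
  have /andP[+ _] : phi m <= phi t < phi m + 1.
    by apply: right => //; apply/andP; split; lra.
  by rewrite pm.
move=> ptd; have : m <= t by apply: ge_inf => //; split; [lra|].
lra.
Qed.

Definition grid (n : nat) : R := (n.+1)%:R^-1.

Lemma grid_gt0 n : 0 < grid n.
Proof. by rewrite invr_gt0 ltr0n. Qed.

Definition block (n : nat) (k : int) : set R := [set d | exists m,
  anchor d m (2 * grid n) /\ k%:~R * grid n <= m < k%:~R * grid n + grid n].

Lemma block_cover d : exists nk : nat * int, block nk.1 nk.2 d.
Proof.
have [m [w [w0 anchor_m]]] := exists_anchor d.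
pose n := Num.truncn (2 / w); pose N : R := (n.+1)%:R.
have N0 : 0 < N by rewrite ltr0n.
have narrow : 2 * grid n < w.
  have : 2 / w < N by apply: truncnS_gt.
  by rewrite /grid -/N !ltr_pdivrMr // mulrC.
exists (n, Num.floor (m * N)), m; split.
  by apply: anchor_shrink anchor_m; rewrite (ltW narrow) mulr_gt0 ?grid_gt0.
have -> : (Num.floor (m * N))%:~R * grid n + grid n =
    (Num.floor (m * N) + 1)%:~R * grid n by rewrite intrD mulrDl mul1r.
have /andP[fl1 fl2] := floor_itv (m * N).
by rewrite /grid -/N ler_pdivrMr // ltr_pdivlMr // fl1.
Qed.

Section DenseBlock.
Variables (n : nat) (k : int) (p q : R).
Hypothesis pq : p < q.
Hypothesis block_dense : dense_in_itv (block n k) p q.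

Local Notation io := (grid n).
Local Notation a := (k%:~R * grid n).

Definition anchor_of (d : R) : R :=
  xget 0 [set m | anchor d m (2 * io) /\ a <= m < a + io].

Lemma anchor_ofP {d} : block n k d ->
  anchor d (anchor_of d) (2 * io) /\ a <= anchor_of d < a + io.
Proof. by move=> Bd; apply: (xgetPex 0 Bd). Qed.

Lemma anchor_right_bound {d t} : block n k d -> T t ->
  anchor_of d <= t < a + io -> d <= phi t.
Proof.
move=> Bd Tt /andP[t1 t2]; have [[_ _ right _] /andP[ad _]] := anchor_ofP Bd.
by apply: right => //; apply/andP; split => //; lra.
Qed.

Lemma anchor_of_monotone {d d'} : block n k d -> block n k d' ->
  anchor_of d <= anchor_of d' -> d <= d'.
Proof.
move=> Bd Bd' le_dd'; have [[Td' pd' _ _] /andP[_ d'a]] := anchor_ofP Bd'.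
by rewrite -pd'; apply: anchor_right_bound => //; apply/andP.
Qed.

(* Anchors cluster from the right at every point t of T in the grid
   cell whose value lies in [p, q): openness of phi at t yields a value d of
   the block slightly above phi t taken just right of t, and the anchor of d
   lies between t and that preimage. *)
Lemma anchors_cluster_right {t eta} : T t -> a <= t < a + io -> p <= phi t < q ->
  0 < eta -> exists2 d, block n k d & t < anchor_of d < t + eta.
Proof.
move=> Tt /andP[a_t t_a] /andP[pt tq] eta0.
have [eps eps0 opn] := phi_right_open Tt (t + eta) ltac:(lra).
pose y := Num.min (phi t + eps) q.
have y1 : y <= phi t + eps by rewrite /y ge_min lexx.
have y2 : y <= q by rewrite /y ge_min lexx orbT.
have y3 : phi t < y by rewrite /y lt_min; apply/andP; split; lra.
have [d Bd /andP[td dy]] := block_dense _ _ pt y3 y2.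
have [t' [Tt' /andP[tt' t'eta] pt']] := opn d ltac:(apply/andP; split; lra).
have [[_ _ _ left] /andP[ad da]] := anchor_ofP Bd.
have t_lt : t < anchor_of d.
  rewrite ltNge; apply/negP => le_at.
  by have := anchor_right_bound Bd Tt (introT andP (conj le_at t_a)); lra.
have le_t' : anchor_of d <= t'.
  rewrite leNgt; apply/negP => lt_t'a.
  by apply: (left t' Tt') => //; apply/andP; split; lra.
by exists d => //; apply/andP; split; lra.
Qed.

(* A right limit u of anchors, lying to the right of some anchor, is in T:
   the values of the anchors right of u decrease to their infimum r, so the
   graph of phi clusters at (u, r) from the right. *)
Lemma right_limit_of_anchors {u d0} : block n k d0 -> anchor_of d0 <= u ->
  (forall eta, 0 < eta -> exists2 d, block n k d & u < anchor_of d < u + eta) ->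
  T u.
Proof.
move=> Bd0 d0u accum; pose Ru := [set d | block n k d /\ u < anchor_of d].
have Ru_inf : has_inf Ru.
  split; first by have [d Bd /andP[ud _]] := accum 1 ltr01; exists d.
  by exists d0 => d [Bd ud]; apply: anchor_of_monotone => //; lra.
suff [] : T u /\ phi u = inf Ru by [].
apply: phi_graph_closed => e b e0 ub.
have [ds [Bds uds] dse] := inf_adherent e0 Ru_inf.
pose eta := Num.min b (anchor_of ds) - u.
have eta0 : 0 < eta by rewrite /eta subr_gt0 lt_min; apply/andP; split.
have eta1 : eta <= b - u by rewrite /eta lerD2r ge_min lexx.
have eta2 : eta <= anchor_of ds - u by rewrite /eta lerD2r ge_min lexx orbT.
have [d Bd /andP[ud du]] := accum eta eta0.
have inf_d : inf Ru <= d by apply: ge_inf => //; case: Ru_inf.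
have d_ds : d <= ds by apply: anchor_of_monotone => //; lra.
have [[Td pd _ _] _] := anchor_ofP Bd.
by exists (anchor_of d); split; rewrite ?pd //; apply/andP; split; lra.
Qed.

(* The contradiction: take d0 < d1 in the block inside (p, q), a point u
   outside T just right of the anchor of d0, and apply the two previous
   lemmas. *)
Lemma dense_block_false : False.
Proof.
have [d0 B0 /andP[pd0 d0q]] := block_dense _ _ (lexx p) pq (lexx q).
have [d1 B1 /andP[d01 d1q]] := block_dense _ _ (ltW pd0) d0q (lexx q).
have [[Td0 pd0' _ _] /andP[a0 _]] := anchor_ofP B0.
have [_ /andP[_ a1]] := anchor_ofP B1.
have t01 : anchor_of d0 < anchor_of d1.
  by rewrite ltNge; apply/negP => /(anchor_of_monotone B1 B0); lra.
have [b0 tb0 cont0] := phi_right_cont Td0 (q - d0) ltac:(lra).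
pose e := Num.min b0 (anchor_of d1).
have e1 : e <= b0 by rewrite /e ge_min lexx.
have e2 : e <= anchor_of d1 by rewrite /e ge_min lexx orbT.
have e3 : anchor_of d0 < e by rewrite /e lt_min; apply/andP; split.
have [u [/andP[u1 u2] nTu]] := T_codense _ _ e3.
apply: nTu; apply: (right_limit_of_anchors B0) => [|eta eta0]; first lra.
pose z := Num.min (u + eta / 2) e.
have z1 : z <= u + eta / 2 by rewrite /z ge_min lexx.
have z2 : z <= e by rewrite /z ge_min lexx orbT.
have z3 : u < z by rewrite /z lt_min; apply/andP; split; lra.
have [t [/andP[t1 t2] Tt]] := T_dense _ _ z3.
have /andP[pt1 pt2] : phi (anchor_of d0) <= phi t < phi (anchor_of d0) + (q - d0).
  by apply: cont0 => //; apply/andP; split; lra.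
have cell : a <= t < a + io by apply/andP; split; lra.
have val : p <= phi t < q by apply/andP; split; lra.
have [|d Bd /andP[td dt]] := anchors_cluster_right Tt cell val (_ : 0 < eta / 2).
  lra.
by exists d => //; apply/andP; split; lra.
Qed.

End DenseBlock.

Lemma no_sorgenfrey_trace : False.
Proof.
have [[n k] [p [q [pq dense]]]] :=
  @baire_interval R _ (fun nk : nat * int => block nk.1 nk.2) block_cover.
exact: (@dense_block_false n k p q pq dense).
Qed.

End SorgenfreyTrace.

Lemma sorgenfrey_open_ritv {R : realType} (a b : R) :
  sorgenfrey_open [set y | a <= y < b].
Proof.
move=> x /andP[ax xb]; exists b => // y /andP[xy yb].
by apply/andP; split => //; apply: le_trans xy.
Qed.

Lemma sorgenfrey_open_oitv {R : realType} (a b : R) :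
  sorgenfrey_open [set y | a < y < b].
Proof.
move=> x /andP[ax xb]; exists b => // y /andP[xy yb].
by apply/andP; split => //; apply: lt_le_trans xy.
Qed.

Section OpenImageTrace.
Variables (R : realType) (X : topologicalType) (S : set X).
Variables (f : R -> X) (h : X -> R) (g : R -> X).
Hypothesis f_cont : forall U : set X, open U -> sorgenfrey_open (f @^-1` U).
Hypothesis f_open : forall V : set R, sorgenfrey_open V -> open (f @` V).
Hypothesis h_cont : forall V : set R, sorgenfrey_open V ->
  exists U : set X, open U /\ S `&` (h @^-1` V) = S `&` U.
Hypothesis g_cont : forall U : set X, open U -> sorgenfrey_open (g @^-1` U).
Hypothesis g_S : forall r, S (g r).
Hypothesis hgK : forall r, h (g r) = r.
Hypothesis ghK : forall x, S x -> g (h x) = x.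

(* f maps open intervals to nonempty open sets, which meet any dense set. *)
Lemma dense_pullback (A : set X) : dense A ->
  forall a b : R, a < b -> exists t, a < t < b /\ A (f t).
Proof.
move=> dA a b ab; have fV_open := f_open _ (sorgenfrey_open_oitv a b).
have fV_ne : f @` [set y | a < y < b] !=set0.
  by exists (f ((a + b) / 2)), ((a + b) / 2) => //; apply/andP; split; lra.
by have [_ [[t tV <-] Aft]] := dA _ fV_ne fV_open; exists t.
Qed.

Lemma pullback_surj : (forall x : X, exists r, f r = x) ->
  forall r, exists t, S (f t) /\ h (f t) = r.
Proof.
by move=> f_surj r; have [t ft] := f_surj (g r); exists t; rewrite ft hgK.
Qed.

(* h o f is continuous from the right on T: pull back [phi t, phi t + e). *)
Lemma pullback_right_cont t : S (f t) -> forall e : R, 0 < e ->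
  exists2 b, t < b & forall t', S (f t') -> t <= t' < b ->
    h (f t) <= h (f t') < h (f t) + e.
Proof.
move=> St e e0; have [U [oU SU]] := h_cont _ (sorgenfrey_open_ritv (h (f t)) (h (f t) + e)).
have [|b tb fU] := f_cont _ oU t.
  have : (S `&` (h @^-1` [set y | h (f t) <= y < h (f t) + e])) (f t).
    by split => //=; apply/andP; split; lra.
  by rewrite SU => -[].
exists b => // t' St' tt'.
have : (S `&` U) (f t') by split => //; apply: fU.
by rewrite -SU => -[].
Qed.

(* h o f is open from the right on T: the image under f of [t, b) is open,
   so its preimage under g contains some [h (f t), h (f t) + e). *)
Lemma pullback_right_open t : S (f t) -> forall b, t < b ->
  exists2 e : R, 0 < e & forall r, h (f t) <= r < h (f t) + e ->
    exists t', [/\ S (f t'), t <= t' < b & h (f t') = r].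
Proof.
move=> St b tb; have fV_open := f_open _ (sorgenfrey_open_ritv t b).
have [|b' tb' gfV] := g_cont _ fV_open (h (f t)).
  by rewrite /= ghK //; exists t => //; apply/andP; split.
exists (b' - h (f t)) => [|r /andP[r1 r2]]; first lra.
have [|t' tt' ft'] := gfV r; first by apply/andP; split; lra.
by exists t'; split; rewrite ?ft' ?hgK.
Qed.

(* The graph of h o f is closed from the right: if (u, r) is a right limit
   of the graph, then f u and g r cannot be separated, since the points t
   with h (f t) just right of r have f t near f u (continuity of f) and
   f t = g (h (f t)) near g r (continuity of g). *)
Lemma pullback_graph_closed : hausdorff_space X -> forall u r,
  (forall e b : R, 0 < e -> u < b ->
    exists t, [/\ S (f t), u <= t < b & r <= h (f t) < r + e]) ->
  S (f u) /\ h (f u) = r.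
Proof.
move=> X_T2 u r graph_near.
suff -> : f u = g r by rewrite hgK.
apply: X_T2 => A B; rewrite !nbhsE => -[U [oU Uu] UA] [V [oV Vr] VB].
have [b1 ub1 fU] := f_cont _ oU u Uu.
have [b2 rb2 gV] := g_cont _ oV r Vr.
have [t [St /andP[t1 t2] /andP[r1 r2]]] := graph_near (b2 - r) b1 ltac:(lra) ub1.
exists (f t); split; first by apply: UA; apply: fU; apply/andP; split.
apply: VB; have := gV (h (f t)) ltac:(apply/andP; split; lra).
by rewrite /= ghK.
Qed.

End OpenImageTrace.

Theorem mainTheorem12 (R : realType) (X : topologicalType) (S : set X) :
  hausdorff_space X -> dense S -> dense (~` S) ->
  @subspace_homeomorphic_to_sorgenfrey R X S ->
  ~ @continuous_open_image_of_sorgenfrey R X.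
Proof.
move=> X_T2 dS dSc [h [g [g_S hgK ghK h_cont g_cont]]] [f [f_surj f_cont f_open]].
apply: (@no_sorgenfrey_trace R (f @^-1` S) (h \o f)).
- exact: dense_pullback f_open S dS.
- exact: dense_pullback f_open (~` S) dSc.
- exact: pullback_surj hgK f_surj.
- exact: pullback_right_cont f_cont h_cont.
- exact: pullback_right_open f_open g_cont g_S hgK ghK.
- exact: pullback_graph_closed f_cont g_cont g_S hgK ghK X_T2.
Qed.
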